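(* Let $p>1$ and let $\{X_\alpha\}$ be an arbitrary family of positive real-valued random variables. Then there exists a random variable $Y$ with $\mathbb{E}|Y|^p<\infty$ such that $X_\alpha\le_{\mathrm{icx}}Y$ for all $\alpha$ if and only if there exists a random variable $Z$ with $\mathbb{E}|Z|^p<\infty$ such that $X_\alpha\le_{\mathrm{st}}Z$ for all $\alpha$.
   Context: ''Positive'' means nonnegative; the random variables need not be on a common probability space. $X_1\le_{\mathrm{st}}X_2$ means $\mathbb{P}(X_1>t)\le\mathbb{P}(X_2>t)$ for all $t\in\mathbb{R}$ (equivalently $\mathbb{E}\phi(X_1)\le\mathbb{E}\phi(X_2)$ for all increasing measurable $\phi\ge 0$). For positive $X_1,X_2$, $X_1\le_{\mathrm{icx}}X_2$ means $\mathbb{E}\phi(X_1)\le\mathbb{E}\phi(X_2)$ for all increasing convex $\phi:\mathbb{R}_+\to\mathbb{R}_+$, equivalently $\mathbb{E}(X_1-t)_+\le\mathbb{E}(X_2-t)_+$ for all $t\ge0$. *)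

From HB Require Import structures.
From mathcomp Require Import all_boot all_order all_algebra.
From mathcomp Require Import all_classical all_reals all_analysis.
Set Implicit Arguments. Unset Strict Implicit. Unset Printing Implicit Defensive.
Import Order.TTheory GRing.Theory Num.Theory.
Local Open Scope classical_set_scope.
Local Open Scope ring_scope.

(* phi : R -> R is increasing and convex on R_+ and maps R_+ into R_+
   (only its values on R_+ matter, since it is applied to nonnegative r.v.s) *)
Definition incr_convex_nonneg (R : realType) (phi : R -> R) : Prop :=
  [/\ (forall x, 0 <= x -> 0 <= phi x),
      (forall x y, 0 <= x -> x <= y -> phi x <= phi y) &
      (forall x y l, 0 <= x -> 0 <= y -> 0 <= l -> l <= 1 ->
         phi (l * x + (1 - l) * y) <= l * phi x + (1 - l) * phi y)].

Definition st_le (R : realType) d1 d2 (T1 : measurableType d1)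
  (T2 : measurableType d2) (P1 : probability T1 R) (P2 : probability T2 R)
  (X1 : T1 -> R) (X2 : T2 -> R) : Prop :=
  forall t : R, (P1 [set w | (t < X1 w)%R] <= P2 [set w | (t < X2 w)%R])%E.

Definition icx_le (R : realType) d1 d2 (T1 : measurableType d1)
  (T2 : measurableType d2) (P1 : probability T1 R) (P2 : probability T2 R)
  (X1 : T1 -> R) (X2 : T2 -> R) : Prop :=
  forall phi : R -> R, incr_convex_nonneg phi ->
    (\int[P1]_w (phi (X1 w))%:E <= \int[P2]_w (phi (X2 w))%:E)%E.

Definition finite_pth_moment (R : realType) d (T : measurableType d)
  (P : probability T R) (p : R) (Y : T -> R) : Prop :=
  (\int[P]_w ((`|Y w| `^ p)%:E) < +oo)%E.

(* If X <=_st Z, then Y := |Z| + 1 dominates X in the increasing convex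
   order: for nondecreasing psi the event {psi(X) > r} is contained in a tail
   event {X > s}, whose probability is at most P(Z > s) <= P(psi(Y) > r); the
   layer-cake formula turns this into E psi(X) <= E psi(Y).

   Conversely, if X <=_icx Y for all X in the family, testing against the hinge
   (x - 2^k)_+ and using Markov's inequality gives the uniform tail bound
   P(X > 2^(k+1)) <= g_k := 2^-k E (Y - 2^k)_+.  A single Z with
   P(Z > t) >= min(1, g_k) for t < 2^(k+2) is built on [0, 1] with the uniform
   law: Z u := 2 + (sum_k (2^(k+2))^p 1{u < g_k})^(1/p).  Its p-th moment is
   controlled by sum_k (2^(k+2))^p g_k <= K E Y^p, because
   sum_k 2^(k(p-1)) (y - 2^k)_+ is a geometric sum dominated by a multiple of
   y^p. *)

From HB Require Import structures.
From mathcomp Require Import all_boot all_order all_algebra.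
From mathcomp Require Import all_classical all_reals all_analysis.
From mathcomp Require Import measurable_realfun.
From mathcomp Require Import ring lra.
Import Order.TTheory GRing.Theory Num.Theory.
Local Open Scope classical_set_scope.
Local Open Scope ring_scope.

Set Implicit Arguments.
Unset Strict Implicit.

Lemma powR_addr_le (R : realType) (p a b : R) : 0 <= p -> 0 <= a -> 0 <= b ->
  (a + b) `^ p <= 2 `^ p * (a `^ p + b `^ p).
Proof.
move=> p0 a0 b0.
have [ab|ba] := leP a b.
- have h : a + b <= 2 * b by lra.
  apply: (le_trans (ge0_ler_powR p0 _ _ h)); rewrite ?nnegrE; try lra.
  rewrite powRM; try lra.
  by apply: ler_wpM2l; [exact: powR_ge0|rewrite lerDr powR_ge0].
- have h : a + b <= 2 * a by lra.
  apply: (le_trans (ge0_ler_powR p0 _ _ h)); rewrite ?nnegrE; try lra.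
  rewrite powRM; try lra.
  by apply: ler_wpM2l; [exact: powR_ge0|rewrite lerDl powR_ge0].
Qed.

Lemma powR2_gt1 (R : realType) (q : R) : 0 < q -> 1 < 2 `^ q.
Proof.
move=> q0; have := @gt0_ltr_powR R q q0 1 2; rewrite powR1.
by apply; rewrite ?nnegrE //; lra.
Qed.

Lemma dyadic_bracket (R : realType) (t : R) : 2 <= t ->
  exists k, 2 ^+ k.+1 <= t /\ t < 2 ^+ k.+2.
Proof.
move=> t2.
have ex_pow : exists n, t < 2 ^+ n.
  exists (Num.Def.archi_bound t).
  apply: (lt_trans (archi_boundP (le_trans _ t2))); first by [].
  by rewrite -natrX ltr_nat ltn_expl.
case: (ex_minnP ex_pow) => -[|[|k]] tk tk_min.
- by move: tk; rewrite expr0; lra.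
- by move: tk; rewrite expr1; lra.
- exists k; split => //; rewrite leNgt; apply/negP => /tk_min.
  by rewrite ltnn.
Qed.

Lemma measurable_superlevel (R : realType) d (T : measurableType d)
  (f : T -> R) (r : R) : measurable_fun setT f -> measurable [set w | r < f w].
Proof.
move=> mf; rewrite -preimage_itvoy.
by have := mf measurableT _ (measurable_itv `]r, +oo[); rewrite setTI.
Qed.

Lemma measurable_fun_powR_norm (R : realType) d (T : measurableType d) (p : R)
  (f : T -> R) : measurable_fun setT f ->
  measurable_fun setT (fun w => (`|f w| `^ p)%:E).
Proof.
move=> mf; apply/measurable_EFinP.
exact: measurableT_comp (measurable_powR p) (measurableT_comp
  (@normr_measurable R setT) mf).
Qed.

Lemma finite_pth_moment_le (R : realType) d (T : measurableType d)
  (P : probability T R) (p c : R) (f g : T -> R) : 0 <= c ->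
  measurable_fun setT f -> measurable_fun setT g ->
  (forall w, `|f w| `^ p <= c * (`|g w| `^ p + 1)) ->
  finite_pth_moment P p g -> finite_pth_moment P p f.
Proof.
move=> c0 mf mg fg gp; rewrite /finite_pth_moment.
have mg1 := emeasurable_funD (measurable_fun_powR_norm p mg) (measurable_cst 1%:E).
apply: (@le_lt_trans _ _ (\int[P]_w (c%:E * ((`|g w| `^ p)%:E + cst 1%:E w)))%E).
  apply: ge0_le_integral => //.
  - exact: measurable_fun_powR_norm.
  - exact: emeasurable_funM (measurable_cst _) mg1.
  - by move=> w _; rewrite -EFinD -EFinM lee_fin.
rewrite ge0_integralZl //; last by move=> w _; rewrite -EFinD lee_fin addr_ge0 ?powR_ge0.
rewrite ge0_integralD //; last exact: measurable_fun_powR_norm.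
rewrite integral_cst // mul1e lte_mul_pinfty ?lee_fin ?ltry //.
by rewrite lte_add_pinfty // (le_lt_trans (probability_le1 P measurableT)) ?ltry.
Qed.

Section stochastic_to_icx.
Context (R : realType) d1 d2 (T1 : measurableType d1) (T2 : measurableType d2)
  (P1 : probability T1 R) (P2 : probability T2 R).

(* The margin [Z + 1 <= Y] absorbs the difference between the closed and the
   open superlevel sets of psi, so no continuity argument is needed. *)
Lemma st_le_nondecreasing_tail (X : T1 -> R) (Z Y : T2 -> R) (psi : R -> R) :
  measurable_fun setT X -> measurable_fun setT Z -> measurable_fun setT Y ->
  measurable_fun setT psi -> nondecreasing_fun psi ->
  (forall w, Z w + 1 <= Y w) -> st_le P1 P2 X Z -> forall r,
  (P1 [set w | (r < psi (X w))%R] <= P2 [set w | (r < psi (Y w))%R])%E.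
Proof.
move=> mX mZ mY mpsi psi_nd ZY XZ r.
have mpX := measurable_superlevel r (measurableT_comp mpsi mX).
have mpY := measurable_superlevel r (measurableT_comp mpsi mY).
have [psi_gt|/existsNP[x0 /negP]] := pselect (forall x, r < psi x).
  rewrite (_ : [set w | r < psi (Y w)] = setT) ?probability_setT.
    exact: probability_le1.
  by apply/seteqP; split => // w _; exact: psi_gt.
rewrite -leNgt => psix0.
have [[x1 psix1]|psi_le] := pselect (exists x, r < psi x); last first.
  rewrite (_ : [set w | r < psi (X w)] = set0) ?measure0 ?measure_ge0 //.
  by apply/seteqP; split => // w /= hw; apply: psi_le; exists (X w).
set S := [set x | r < psi x].
have S_lb : has_lbound S.
  exists x0 => y /= psiy; rewrite leNgt; apply/negP => yx0.
  by have := psi_nd _ _ (ltW yx0); move: psiy; rewrite /S /=; lra.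
have infS_le : forall y, S y -> inf S <= y := ge_inf S_lb.
have gt_infS : forall y, inf S < y -> S y.
  move=> y /(inf_lt (ex_intro _ x1 psix1)) [z Sz zy].
  exact: lt_le_trans Sz (psi_nd _ _ (ltW zy)).
apply: (@le_trans _ _ (P1 [set w | inf S - 1 < X w])).
  apply: le_measure; rewrite ?inE //; first exact: measurable_superlevel.
  by move=> w /= /infS_le; lra.
apply: (le_trans (XZ (inf S - 1))); apply: le_measure; rewrite ?inE //.
  exact: measurable_superlevel mZ.
by move=> w /= Zw; apply: gt_infS; have := ZY w; lra.
Qed.

Lemma st_le_icx_le (X : {RV P1 >-> R}) (Z Y : {RV P2 >-> R}) :
  (forall w, 0 <= X w) -> (forall w, 0 <= Y w) ->
  (forall w, Z w + 1 <= Y w) -> st_le P1 P2 X Z -> icx_le P1 P2 X Y.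
Proof.
move=> X0 Y0 ZY XZ phi [phi0 phi_nd _].
pose psi x := phi (Num.max x 0).
have psi_nd : nondecreasing_fun psi.
  move=> x y xy; apply: phi_nd; first by rewrite le_max lexx orbT.
  exact: le_max2 xy (lexx 0).
have mpsi := nondecreasing_measurable measurableT psi_nd.
pose pX : {RV P1 >-> R} := mfun_Sub (mem_set (measurableT_comp mpsi
  (measurable_funPT X)) : psi \o X \in mfun).
pose pY : {RV P2 >-> R} := mfun_Sub (mem_set (measurableT_comp mpsi
  (measurable_funPT Y)) : psi \o Y \in mfun).
have psi0 x : 0 <= psi x by apply: phi0; rewrite le_max lexx orbT.
have -> : (\int[P1]_w (phi (X w))%:E = 'E_P1[pX])%E.
  rewrite expectation_def; apply: eq_integral => w _.
  by rewrite /pX mfun_valP /= /psi (max_idPl (X0 w)).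
have -> : (\int[P2]_w (phi (Y w))%:E = 'E_P2[pY])%E.
  rewrite expectation_def; apply: eq_integral => w _.
  by rewrite /pY mfun_valP /= /psi (max_idPl (Y0 w)).
rewrite (@ge0_expectation_ccdf _ _ _ _ pX); last by move=> w; rewrite mfun_valP psi0.
rewrite (@ge0_expectation_ccdf _ _ _ _ pY); last by move=> w; rewrite mfun_valP psi0.
apply: ge0_le_integral => //.
- exact: measurable_funTS (ccdf_measurable pX).
- exact: measurable_funTS (ccdf_measurable pY).
move=> r _; rewrite /ccdf /distribution /pushforward /= !preimage_itvoy.
exact: st_le_nondecreasing_tail (measurable_funPT X) (measurable_funPT Z)
  (measurable_funPT Y) mpsi psi_nd ZY XZ r.
Qed.

End stochastic_to_icx.

Definition hinge (R : realType) (c x : R) := Num.max (x - c) 0.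

Lemma hinge_ge (R : realType) (c x : R) : x - c <= hinge c x.
Proof. by rewrite /hinge le_max lexx. Qed.

Lemma hinge_ge0 (R : realType) (c x : R) : 0 <= hinge c x.
Proof. by rewrite /hinge le_max lexx orbT. Qed.

Lemma le_hinge (R : realType) (c x y : R) : x <= y -> hinge c x <= hinge c y.
Proof. by move=> xy; rewrite /hinge le_max2 // lerB. Qed.

Lemma incr_convex_hinge (R : realType) (c : R) : incr_convex_nonneg (hinge c).
Proof.
split=> [x _|x y _|x y l _ _ l0 l1]; first exact: hinge_ge0.
  exact: le_hinge.
rewrite {1}/hinge ge_max; apply/andP; split.
  have := hinge_ge c x; have := hinge_ge c y.
  have : l * (x - c) <= l * hinge c x by rewrite ler_wpM2l // hinge_ge.
  have : (1 - l) * (y - c) <= (1 - l) * hinge c y.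
    by rewrite ler_wpM2l ?subr_ge0 // hinge_ge.
  lra.
have : 0 <= l * hinge c x by rewrite mulr_ge0 ?hinge_ge0.
have : 0 <= (1 - l) * hinge c y by rewrite mulr_ge0 ?subr_ge0 ?hinge_ge0.
lra.
Qed.

Lemma measurable_hinge (R : realType) (c : R) : measurable_fun setT (hinge c).
Proof.
rewrite (_ : hinge c = ((@id R) \- cst c) \max (cst 0)) //.
apply: measurable_maxr; last exact: measurable_cst.
by apply: measurable_funB; [exact: measurable_id|exact: measurable_cst].
Qed.

(* Markov's inequality for the hinge at [c], which is worth [c] at [2 c]. *)
Lemma icx_le_tail_bound (R : realType) d1 d2 (T1 : measurableType d1)
  (T2 : measurableType d2) (P1 : probability T1 R) (P2 : probability T2 R)
  (X : {RV P1 >-> R}) (Y : T2 -> R) (c : R) : 0 < c ->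
  (forall w, 0 <= X w) -> icx_le P1 P2 X Y ->
  (P1 [set w | (2 * c < X w)%R] <= c^-1%:E * \int[P2]_w (hinge c (Y w))%:E)%E.
Proof.
move=> c0 X0 XY.
have := @markov _ _ _ P1 X (hinge c) (2 * c) ltac:(lra) (measurable_hinge c)
  (fun r _ => hinge_ge0 c r) (fun x y _ _ => @le_hinge R c x y).
have -> : hinge c (2 * c) = c.
  by rewrite /hinge (_ : 2 * c - c = c) ?(max_idPl (ltW c0)) //; lra.
have -> : ('E_P1[(hinge c \o Num.norm) \o X] = \int[P1]_w (hinge c (X w))%:E)%E.
  by rewrite unlock; apply: eq_integral => w _ /=; rewrite ger0_norm.
move=> /le_trans/(_ (XY _ (incr_convex_hinge c))) cXY.
have {}cXY : (c%:E * P1 [set w | (2 * c < X w)%R] <=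
              \int[P2]_w (hinge c (Y w))%:E)%E.
  apply: le_trans cXY; apply: lee_wpmul2l; first by rewrite lee_fin ltW.
  apply: le_measure; rewrite ?inE.
  - exact: measurable_superlevel (measurable_funPT X).
  - rewrite (_ : [set _ | _] = X @^-1` `[2 * c, +oo[).
      exact: measurable_funPTI.
    by apply/seteqP; split => w /=; rewrite in_itv /= andbT lee_fin ger0_norm.
  - by move=> w /= h; rewrite lee_fin ger0_norm // ltW.
have := lee_wpmul2l (_ : (0 <= c^-1%:E)%E) cXY.
rewrite muleA -EFinM mulVf ?gt_eqF // mul1e; apply.
by rewrite lee_fin invr_ge0 ltW.
Qed.

Section uniform_cdf.
Variable R : realType.
Local Notation U := (uniform_prob (@ltr01 R)).

Lemma measurable_lt_fin (e : \bar R) : measurable [set u : R | (u%:E < e)%E].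
Proof.
case: e => [r| |].
- rewrite (_ : [set _ | _] = `]-oo, r[%classic); first exact: measurable_itv.
  by apply/seteqP; split => u /=; rewrite in_itv /= lte_fin.
- by rewrite (_ : [set _ | _] = setT) //; apply/seteqP; split=> u //= _; rewrite ltry.
- by rewrite (_ : [set _ | _] = set0) //; apply/seteqP; split=> u //=; rewrite ltNye.
Qed.

Lemma uniform_probE (A : set R) : measurable A ->
  U A = lebesgue_measure (A `&` `[0, 1]).
Proof.
move=> mA; rewrite /uniform_prob integral_uniform_pdf.
transitivity (\int[lebesgue_measure]_(x in A `&` `[0%R, 1%R]) (cst 1%:E) x)%E.
  apply: eq_integral => x; rewrite inE => -[_ /=]; rewrite in_itv /= => x01.
  by rewrite /uniform_pdf x01 subr0 invr1.
by rewrite integral_cst ?mul1e //; exact: measurableI.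
Qed.

Lemma uniform_prob_lt_le (r : R) : 0 <= r -> (U [set u | (u < r)%R] <= r%:E)%E.
Proof.
move=> r0; rewrite uniform_probE; last exact: measurable_lt_fin r%:E.
apply: (@le_trans _ _ (lebesgue_measure (`[0, r[%classic : set R))).
  apply: le_measure; rewrite ?inE.
  - exact: measurableI (measurable_lt_fin r%:E) (measurable_itv _).
  - exact: measurable_itv.
  - by move=> u [/= ur]; rewrite !in_itv /= => /andP[-> _].
by rewrite lebesgue_measure_itv /= lte_fin; case: ifP; rewrite ?sube0 ?lee_fin.
Qed.

Lemma le_uniform_prob_lt (r : R) : 0 <= r -> r <= 1 ->
  (r%:E <= U [set u | (u < r)%R])%E.
Proof.
move=> r0 r1; rewrite uniform_probE; last exact: measurable_lt_fin r%:E.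
apply: (@le_trans _ _ (lebesgue_measure (`[0, r[%classic : set R))).
  rewrite lebesgue_measure_itv /= lte_fin; case: ifP => r_gt0; rewrite ?sube0 //.
  by rewrite lee_fin; move/negbT: r_gt0; rewrite -leNgt.
apply: le_measure; rewrite ?inE.
- exact: measurable_itv.
- exact: measurableI (measurable_lt_fin r%:E) (measurable_itv _).
- move=> u /=; rewrite !in_itv /= => /andP[u0 ur]; split => //.
  by rewrite u0 /= ltW // (lt_le_trans ur r1).
Qed.

Lemma uniform_prob_lt_fin_le (e : \bar R) : (0 <= e)%E ->
  (U [set u | (u%:E < e)%E] <= e)%E.
Proof.
case: e => [r| |] //; last by move=> _; rewrite leey.
rewrite lee_fin => r0.
rewrite (_ : [set _ | _] = [set u | u < r]); first exact: uniform_prob_lt_le.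
by apply/seteqP; split=> u /=; rewrite lte_fin.
Qed.

Lemma le_uniform_prob_lt_fin (e x : \bar R) : (0 <= e)%E -> (x <= 1)%E ->
  (x <= e)%E -> (x <= U [set u | (u%:E < e)%E])%E.
Proof.
case: e => [r| |] //; last first.
  move=> _ x1 _; rewrite (_ : [set _ | _] = setT) ?probability_setT //.
  by apply/seteqP; split=> u //= _; rewrite ltry.
rewrite lee_fin => r0 x1 xr.
rewrite (_ : [set _ | _] = [set u | u < r]); last first.
  by apply/seteqP; split=> u /=; rewrite lte_fin.
pose s := Num.min r 1.
have s0 : 0 <= s by rewrite le_min r0 ler01.
have s1 : s <= 1 by rewrite ge_min lexx orbT.
have xs : (x <= s%:E)%E by rewrite /s; case: (leP r 1).
apply: (le_trans xs); apply: (le_trans (le_uniform_prob_lt s0 s1)).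
apply: le_measure; rewrite ?inE; try exact: measurable_lt_fin _%:E.
by move=> u /= us; apply: (lt_le_trans us); rewrite ge_min lexx.
Qed.

End uniform_cdf.

Lemma mul_powRB1 (R : realType) (p y : R) : p != 0 -> 0 <= y ->
  y * y `^ (p - 1) = y `^ p.
Proof.
move=> p0; rewrite le_eqVlt => /orP[/eqP <-|y0]; first by rewrite mul0r powR0.
rewrite -{1}(powRr1 (ltW y0)) -powRD; last by apply/implyP => _; rewrite gt_eqF.
by rewrite addrC subrK.
Qed.

Lemma sum_dyadic_powR_le (R : realType) (q y : R) n : 0 < q -> 0 <= y ->
  \sum_(k < n) (if 2 ^+ k < y then (2 ^+ k) `^ q else 0) <=
  (Num.min (2 ^+ n) (2 * y)) `^ q / (2 `^ q - 1).
Proof.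
move=> q0 y0; have r1 := powR2_gt1 q0.
have ir0 : 0 <= (2 `^ q - 1)^-1 by rewrite invr_ge0; lra.
elim: n => [|n IH]; first by rewrite big_ord0 mulr_ge0 // powR_ge0.
rewrite big_ord_recr /=.
have e2 : (2 : R) ^+ n.+1 = 2 * 2 ^+ n by rewrite exprS.
have p0 : (0 : R) <= 2 ^+ n by rewrite exprn_ge0.
case: ifP => h.
- rewrite (min_idPl _) in IH; last lra.
  rewrite (min_idPl _); last lra.
  rewrite e2 powRM //.
  set a := (2 ^+ n) `^ q in IH *; set r := 2 `^ q in IH r1 ir0 *.
  have -> : r * a / (r - 1) = a / (r - 1) + a by field; lra.
  lra.
- rewrite addr0; apply: (le_trans IH); apply: ler_wpM2r => //.
  apply: ge0_ler_powR; rewrite ?nnegrE ?le_min ?p0 /=; try lra.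
  by rewrite !ge_min lexx orbT andbT e2; apply/orP; left; lra.
Qed.

(* For [y >= 0] only the terms with [2^k < y] contribute, each at most [y]. *)
Lemma sum_dyadic_hinge_le (R : realType) (q y : R) n : 0 < q -> 0 <= y ->
  \sum_(k < n) (2 ^+ k) `^ q * hinge (2 ^+ k) y <=
  y * ((2 * y) `^ q / (2 `^ q - 1)).
Proof.
move=> q0 y0; have r1 := powR2_gt1 q0.
apply: (@le_trans _ _ (y * \sum_(k < n) (if 2 ^+ k < y then (2 ^+ k) `^ q else 0))).
  rewrite mulr_sumr; apply: ler_sum => k _.
  have p0 : (0 : R) <= 2 ^+ k by rewrite exprn_ge0.
  case: ifP => h.
  - rewrite /hinge (max_idPl _); last lra.
    by rewrite mulrC; apply: ler_wpM2r; [exact: powR_ge0|lra].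
  - rewrite /hinge (max_idPr _); last by move/negbT: h; rewrite -leNgt; lra.
    by rewrite !mulr0.
apply: ler_wpM2l => //; apply: (le_trans (sum_dyadic_powR_le n q0 y0)).
apply: ler_wpM2r; first by rewrite invr_ge0; lra.
apply: ge0_ler_powR; rewrite ?nnegrE ?le_min ?ge_min ?lexx ?orbT //; try lra.
by rewrite exprn_ge0 /=; lra.
Qed.

Section dominating_variable.
Variables (R : realType) (p : R) (dY : measure_display) (TY : measurableType dY)
  (PY : probability TY R) (Y : {RV PY >-> R}).
Hypotheses (p_gt1 : 1 < p) (Y_ge0 : forall w, 0 <= Y w)
  (Y_moment : finite_pth_moment PY p Y).
Local Notation U := (uniform_prob (@ltr01 R)).

Let p_gt0 : 0 < p. Proof. exact: lt_trans ltr01 p_gt1. Qed.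

Definition tail_bound k : \bar R :=
  (((2 ^+ k)^-1)%:E * \int[PY]_w (hinge (2 ^+ k) (Y w))%:E)%E.

Definition level_weight k : R := (2 ^+ k.+2) `^ p.

Definition level_set k : set R := [set u | (u%:E < tail_bound k)%E].

Definition weight (u : R) : \bar R :=
  (\sum_(k <oo) (level_weight k)%:E * (\1_(level_set k) u)%:E)%E.

(* [weight u] may be [+oo]; this happens only on a [U]-null set, where [fine]
   returns the junk value [0]. *)
Definition dominating_rv (u : R) : R := 2 + fine (weight u) `^ p^-1.

Lemma measurable_hinge_Y c :
  measurable_fun setT (fun w => (hinge c (Y w))%:E).
Proof.
exact/measurable_EFinP/(measurableT_comp (measurable_hinge c) (measurable_funPT Y)).
Qed.

Lemma tail_bound_ge0 k : (0 <= tail_bound k)%E.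
Proof.
rewrite mule_ge0 ?lee_fin ?invr_ge0 ?exprn_ge0 //.
by apply: integral_ge0 => w _; rewrite lee_fin hinge_ge0.
Qed.

Lemma measurable_level_set k : measurable (level_set k).
Proof. exact: measurable_lt_fin. Qed.

Lemma weight_term_ge0 k u : (0 <= (level_weight k)%:E * (\1_(level_set k) u)%:E)%E.
Proof. by rewrite -EFinM lee_fin mulr_ge0 ?powR_ge0. Qed.

Lemma measurable_weight_term k :
  measurable_fun setT (fun u => (level_weight k)%:E * (\1_(level_set k) u)%:E)%E.
Proof.
rewrite (_ : (fun u => _) = EFin \o (fun u => level_weight k * \1_(level_set k) u)).
  apply/measurable_EFinP; apply: measurable_funM; first exact: measurable_cst.
  exact: measurable_indic (measurable_level_set k).
by apply/funext => u /=; rewrite EFinM.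
Qed.

Lemma weight_ge0 u : (0 <= weight u)%E.
Proof. by apply: nneseries_ge0 => k _ _; exact: weight_term_ge0. Qed.

Lemma measurable_weight : measurable_fun setT weight.
Proof.
apply: ge0_emeasurable_sum => k; first by move=> u _ _; exact: weight_term_ge0.
by move=> _; exact: measurable_weight_term.
Qed.

Lemma integral_weight :
  (\int[U]_u weight u = \sum_(k <oo) (level_weight k)%:E * U (level_set k))%E.
Proof.
rewrite integral_nneseries //; last 2 first.
- by move=> k; exact: measurable_weight_term.
- by move=> k u _; exact: weight_term_ge0.
apply: eq_eseriesr => k _.
have mI : measurable_fun setT (fun u : R => (\1_(level_set k) u : R)%:E).
  change (measurable_fun setT (EFin \o (\1_(level_set k) : R -> R))).
  by apply/measurable_EFinP; exact: measurable_indic (measurable_level_set k).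
rewrite (ge0_integralZl U measurableT mI); last 2 first.
- by move=> u _; rewrite lee_fin indicE; case: (_ \in _).
- by rewrite lee_fin powR_ge0.
by rewrite integral_indic ?setIT //; exact: measurable_level_set.
Qed.

Definition dyadic_coef k : R := 4 `^ p * (2 ^+ k) `^ (p - 1).

Lemma dyadic_coef_ge0 k : 0 <= dyadic_coef k.
Proof. by rewrite mulr_ge0 ?powR_ge0. Qed.

Lemma level_weight_tail_bound k : ((level_weight k)%:E * tail_bound k =
  \int[PY]_w (dyadic_coef k * hinge (2 ^+ k) (Y w))%:E)%E.
Proof.
have two_k_gt0 : (0 : R) < 2 ^+ k by rewrite exprn_gt0.
have coefE : level_weight k / 2 ^+ k = dyadic_coef k.
  rewrite /level_weight /dyadic_coef (_ : (2 : R) ^+ k.+2 = 4 * 2 ^+ k); last first.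
    by rewrite !exprS mulrA; congr (_ * _); lra.
  rewrite powRM ?exprn_ge0 // -mulrA -{1}(mul_powRB1 (lt0r_neq0 p_gt0) (ltW two_k_gt0)).
  by rewrite mulrAC mulfV ?gt_eqF ?mul1r.
under eq_integral do rewrite EFinM.
rewrite ge0_integralZl //; last 3 first.
- exact: measurable_hinge_Y.
- by move=> w _; rewrite lee_fin hinge_ge0.
- by rewrite lee_fin dyadic_coef_ge0.
by rewrite /tail_bound muleA -EFinM coefE.
Qed.

Definition moment_constant : R := 4 `^ p * (2 `^ (p - 1) / (2 `^ (p - 1) - 1)).

Lemma moment_constant_ge0 : 0 <= moment_constant.
Proof.
have : 1 < 2 `^ (p - 1) by rewrite powR2_gt1 // subr_gt0.
by move=> ?; rewrite mulr_ge0 ?powR_ge0 // divr_ge0 ?powR_ge0 // subr_ge0 ltW.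
Qed.

Lemma nneseries_dyadic_hinge_le y : 0 <= y ->
  (\sum_(k <oo) (dyadic_coef k * hinge (2 ^+ k) y)%:E <=
   (moment_constant * y `^ p)%:E)%E.
Proof.
move=> y0; apply: lime_le.
  by apply: is_cvg_nneseries => k _; rewrite lee_fin mulr_ge0 ?dyadic_coef_ge0 ?hinge_ge0.
apply: nearW => n; rewrite sumEFin lee_fin big_mkord.
rewrite (_ : \sum_(k < n) _ =
    4 `^ p * \sum_(k < n) (2 ^+ k) `^ (p - 1) * hinge (2 ^+ k) y); last first.
  by rewrite mulr_sumr; apply: eq_bigr => k _; rewrite /dyadic_coef mulrA.
have q0 : 0 < p - 1 by rewrite subr_gt0.
apply: (le_trans (ler_wpM2l (powR_ge0 _ _) (sum_dyadic_hinge_le n q0 y0))).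
rewrite /moment_constant -mulrA ler_wpM2l ?powR_ge0 // powRM //.
by rewrite -(mul_powRB1 (lt0r_neq0 p_gt0) y0) le_eqVlt; apply/orP; left; apply/eqP; ring.
Qed.

Lemma integral_weight_le :
  (\int[U]_u weight u <= moment_constant%:E * \int[PY]_w (`|Y w| `^ p)%:E)%E.
Proof.
have coef_hinge_ge0 k w : (0 <= (dyadic_coef k * hinge (2 ^+ k) (Y w))%:E)%E.
  by rewrite lee_fin mulr_ge0 ?dyadic_coef_ge0 ?hinge_ge0.
have m_coef_hinge k : measurable_fun setT
    (fun w => (dyadic_coef k * hinge (2 ^+ k) (Y w))%:E).
  under eq_fun do rewrite EFinM.
  exact: emeasurable_funM (measurable_cst _) (measurable_hinge_Y _).
rewrite integral_weight.
apply: (@le_trans _ _ (\sum_(k <oo) (level_weight k)%:E * tail_bound k)%E).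
  apply: lee_nneseries => k _; first by rewrite mule_ge0 ?lee_fin ?powR_ge0.
  apply: lee_wpmul2l; first by rewrite lee_fin powR_ge0.
  exact: uniform_prob_lt_fin_le (tail_bound_ge0 k).
rewrite (eq_eseriesr (fun k _ => level_weight_tail_bound k)).
rewrite -integral_nneseries //.
rewrite -ge0_integralZl //; last 2 first.
- exact: measurable_fun_powR_norm (measurable_funPT Y).
- by rewrite lee_fin moment_constant_ge0.
apply: ge0_le_integral => //.
- by move=> w _; apply: nneseries_ge0.
- by apply: ge0_emeasurable_sum => k; [move=> w _ _|move=> _].
- apply: emeasurable_funM (measurable_cst _) _.
  exact: measurable_fun_powR_norm (measurable_funPT Y).
- by move=> w _; rewrite -EFinM ger0_norm //; exact: nneseries_dyadic_hinge_le.
Qed.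

Lemma integral_weight_lt_pinfty : (\int[U]_u weight u < +oo)%E.
Proof.
apply: le_lt_trans integral_weight_le _.
by rewrite lte_mul_pinfty ?lee_fin ?moment_constant_ge0.
Qed.

Lemma integrable_weight : U.-integrable setT weight.
Proof.
apply/integrableP; split; first exact: measurable_weight.
under eq_integral do rewrite gee0_abs ?weight_ge0 //.
exact: integral_weight_lt_pinfty.
Qed.

Lemma measurable_root_weight :
  measurable_fun setT (fun u => fine (weight u) `^ p^-1).
Proof.
apply: measurableT_comp (measurable_powR _) _.
exact: measurableT_comp (fine_measurable measurableT) measurable_weight.
Qed.

Lemma measurable_dominating_rv : measurable_fun setT dominating_rv.
Proof. exact: measurable_funD (measurable_cst _) measurable_root_weight. Qed.

Lemma finite_pth_moment_dominating_rv : finite_pth_moment U p dominating_rv.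
Proof.
have p_ge0 := ltW p_gt0.
pose root_weight u := fine (weight u) `^ p^-1.
have rootK u : root_weight u `^ p = fine (weight u).
  rewrite -powRrM mulVf ?powRr1 ?gt_eqF //.
  exact/fine_ge0/weight_ge0.
have root_weightE u : `|root_weight u| `^ p = fine (weight u).
  by rewrite ger0_norm ?powR_ge0.
apply: (@finite_pth_moment_le R _ _ U p (2 `^ p * 2 `^ p) _ root_weight).
- by rewrite mulr_ge0 ?powR_ge0.
- exact: measurable_dominating_rv.
- exact: measurable_root_weight.
- move=> u; rewrite root_weightE ger0_norm ?addr_ge0 ?powR_ge0 //.
  apply: le_trans (powR_addr_le p_ge0 _ (powR_ge0 _ _)) _; first lra.
  rewrite rootK -mulrA ler_wpM2l ?powR_ge0 // mulrDr addrC lerD //.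
    by apply: ler_peMl; [exact/fine_ge0/weight_ge0|exact/ltW/powR2_gt1].
  by rewrite mulr1.
rewrite /finite_pth_moment; under eq_integral do rewrite root_weightE.
apply: le_lt_trans integral_weight_lt_pinfty; apply: ge0_le_integral => //.
- by move=> u _; rewrite lee_fin fine_ge0 ?weight_ge0.
- apply/measurable_EFinP.
  exact: measurableT_comp (fine_measurable measurableT) measurable_weight.
- exact: measurable_weight.
- by move=> u _; have := weight_ge0 u; case: (weight u).
Qed.

Lemma dominating_rv_ge2 u : 2 <= dominating_rv u.
Proof. by rewrite lerDl powR_ge0. Qed.

Lemma weight_term_le k u :
  ((level_weight k)%:E * (\1_(level_set k) u)%:E <= weight u)%E.
Proof.
apply: le_trans (nneseries_lim_ge k.+1 (fun n _ _ => weight_term_ge0 n u)).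
rewrite big_nat_recr //= leeDr //.
by apply: sume_ge0 => n _; exact: weight_term_ge0.
Qed.

Lemma lt_dominating_rv k u : level_set k u -> weight u \is a fin_num ->
  2 ^+ k.+2 < dominating_rv u.
Proof.
move=> uk w_fin; have := weight_term_le k u.
rewrite indicE mem_set //= mulr1n -EFinM mulr1 -(fineK w_fin) lee_fin => wk.
have : level_weight k `^ p^-1 <= fine (weight u) `^ p^-1.
  by rewrite ge0_ler_powR ?invr_ge0 ?nnegrE ?powR_ge0 ?fine_ge0 ?weight_ge0 // ltW.
rewrite /level_weight -powRrM mulfV ?gt_eqF // powRr1 ?exprn_ge0 //.
by rewrite /dominating_rv; lra.
Qed.

Lemma tail_le_level_set d1 (T1 : measurableType d1) (P1 : probability T1 R)
  (X : {RV P1 >-> R}) k : (forall w, 0 <= X w) -> icx_le P1 PY X Y ->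
  (P1 [set w | (2 ^+ k.+1 < X w)%R] <= U (level_set k))%E.
Proof.
move=> X0 XY; rewrite exprS.
apply: le_uniform_prob_lt_fin; first exact: tail_bound_ge0.
  exact: probability_le1 (measurable_superlevel _ (measurable_funPT X)).
exact: icx_le_tail_bound (exprn_gt0 _ _) X0 XY.
Qed.

Lemma st_le_dominating_rv d1 (T1 : measurableType d1) (P1 : probability T1 R)
  (X : {RV P1 >-> R}) : (forall w, 0 <= X w) -> icx_le P1 PY X Y ->
  st_le P1 U X dominating_rv.
Proof.
move=> X0 XY t.
have mX := measurable_superlevel t (measurable_funPT X).
have [t_lt2|t_ge2] := ltP t 2.
  rewrite (_ : [set w | t < dominating_rv w] = setT) ?probability_setT.
    exact: probability_le1.
  by apply/seteqP; split => // u _ /=; exact: lt_le_trans t_lt2 (dominating_rv_ge2 u).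
have [k [kt tk]] := dyadic_bracket t_ge2.
apply: (@le_trans _ _ (P1 [set w | (2 ^+ k.+1 < X w)%R])).
  apply: le_measure; rewrite ?inE //; first exact: measurable_superlevel.
  by move=> w /=; exact: le_lt_trans kt.
apply: le_trans (tail_le_level_set k X0 XY) _.
have mZ := measurable_superlevel t measurable_dominating_rv.
have [N [mN N0 w_fin]] := integrable_ae measurableT integrable_weight.
rewrite -(measureU0 (mu := U) mZ mN N0); apply: le_measure; rewrite ?inE.
- exact: measurable_level_set.
- exact: measurableU.
move=> u uk; have [Nu|nNu] := pselect (N u); [by right|left].
apply: lt_trans tk (lt_dominating_rv uk _).
by apply: contrapT => w_inf; apply/nNu/w_fin => /= /(_ I).
Qed.

End dominating_variable.

Theorem mainTheorem3 (R : realType) (p : R) (hp : 1 < p)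
  (I : Type) (dT : I -> measure_display) (T : forall i, measurableType (dT i))
  (P : forall i, probability (T i) R) (X : forall i, {RV P i >-> R})
  (hX : forall i w, 0 <= X i w) :
  (exists (dY : measure_display) (TY : measurableType dY)
          (PY : probability TY R) (Y : {RV PY >-> R}),
     (forall w, 0 <= Y w) /\ finite_pth_moment PY p Y /\
     forall i, icx_le (P i) PY (X i) Y)
  <->
  (exists (dZ : measure_display) (TZ : measurableType dZ)
          (PZ : probability TZ R) (Z : {RV PZ >-> R}),
     finite_pth_moment PZ p Z /\
     forall i, st_le (P i) PZ (X i) Z).
Proof.
split=> [[dY [TY [PY [Y [Y0 [Y_moment XY]]]]]]|[dZ [TZ [PZ [Z [Z_moment XZ]]]]]].
  exists _, _, (uniform_prob (@ltr01 R)).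
  unshelve eexists.
    refine (@mfun_Sub _ _ (measurableTypeR R) _ (dominating_rv p Y) _).
    by apply: mem_set => mD B mB; exact: measurable_dominating_rv mD B mB.
  split.
    exact: finite_pth_moment_dominating_rv hp Y0 Y_moment.
  by move=> i t; have := st_le_dominating_rv hp Y0 Y_moment (hX i) (XY i) t.
have mY : measurable_fun setT (fun w => `|Z w| + 1).
  apply: measurable_funD (measurable_cst _).
  exact: measurableT_comp (@normr_measurable R setT) (measurable_funPT Z).
have Y0 w : 0 <= `|Z w| + 1 by rewrite addr_ge0.
exists dZ, TZ, PZ, (mfun_Sub (mem_set mY : _ \in mfun)); split=> //; split.
  apply: finite_pth_moment_le (powR_ge0 2 p) mY (measurable_funPT Z) _ Z_moment.
  move=> w; rewrite ger0_norm //.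
  by have := powR_addr_le (ltW (lt_trans ltr01 hp)) (normr_ge0 (Z w)) ler01; rewrite powR1.
move=> i; apply: st_le_icx_le (hX i) _ _ (XZ i) => w /=; first exact: Y0.
by rewrite lerD2r ler_norm.
Qed.
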